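(* If $G$ is a connected graph, then $\mathrm{id}^{\leq 3}(G)\leq \left\lceil \frac{3|E(G)|}{4}\right\rceil$.
   Context: All graphs are finite and simple. For an oriented graph $D$ and a set $X\subseteq V(D)$, the inversion of $X$ reverses the orientation of every arc with both endvertices in $X$. For an integer $p\ge 2$, a $(\leq p)$-inversion is the inversion of a set of at most $p$ vertices. For a graph $G$, $\mathrm{id}^{\leq p}(G)$ (the $(\leq p)$-inversion diameter) is the maximum, over all ordered pairs $(\vec G_1,\vec G_2)$ of orientations of $G$ (on the same labelled vertex set), of the minimum number of $(\leq p)$-inversions whose successive application transforms $\vec G_1$ into $\vec G_2$. *)

From mathcomp Require Import all_boot.
Set Implicit Arguments. Unset Strict Implicit. Unset Printing Implicit Defensive.

Definition simple_graph (T : finType) (e : rel T) : Prop :=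
  symmetric e /\ irreflexive e.

Definition connected_graph (T : finType) (e : rel T) : Prop :=
  forall x y : T, connect e x y.

Definition edges (T : finType) (e : rel T) : {set {set T}} :=
  [set A : {set T} | [exists x, [exists y, e x y && (A == [set x; y])]]].

(* An orientation D of G: o x y means arc x -> y; every edge gets exactly
   one direction, and arcs only on edges. *)
Definition orientation (T : finType) (e : rel T) (o : rel T) : Prop :=
  forall x y : T, (o x y -> e x y) /\ (e x y -> o x y = ~~ o y x).

Definition invert (T : finType) (X : {set T}) (o : rel T) : rel T :=
  fun x y => if (x \in X) && (y \in X) then o y x else o x y.

Definition invert_seq (T : finType) (s : seq {set T}) (o : rel T) : rel T :=
  foldl (fun o X => invert X o) o s.

Definition inv_dist_le (T : finType) (p : nat) (o1 o2 : rel T) (k : nat) : Prop :=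
  exists s : seq {set T},
    size s <= k /\ all (fun X : {set T} => #|X| <= p) s /\
    forall x y, invert_seq s o1 x y = o2 x y.

(* id^{<= p}(G) <= k : for every ordered pair of orientations of G, the
   (<= p)-inversion distance is at most k. *)
Definition inv_diam_le (T : finType) (p : nat) (e : rel T) (k : nat) : Prop :=
  forall o1 o2 : rel T, orientation e o1 -> orientation e o2 ->
    inv_dist_le p o1 o2 k.

From mathcomp Require Import all_boot zify.
Set Implicit Arguments. Unset Strict Implicit. Unset Printing Implicit Defensive.

(* An arc xy is reversed by a sequence of inversions iff an odd number of the
   inverted sets contain {x, y}, so it suffices to realise any parity pattern on
   the edges.  Peel off pieces spanned by a "fork" c-a, c-b: the edges inside
   {c, a, b} are either a path of length 2, whose parities are fixed by one
   inversion ({c, a, b} or a single edge), or a triangle, fixed by two (the whole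
   triangle, or at most two of its edges); both cost at most 3/4 per edge.  The
   invariant kept is that all remaining edges lie in the component of a root r.
   For a vertex v farthest from r with BFS parent p, deleting a fork keeps it:
   the fork v-p-u if p has another neighbour u at maximal distance, and otherwise
   the path v-p-q towards r; when p = r no such q exists, but then the graph is
   the single edge rv. *)

Section Inversions.
Variable T : finType.
Implicit Types (s : seq {set T}) (A : {set T}).

Definition ncover s A := count (fun X : {set T} => A \subset X) s.

Lemma ncover_cat s1 s2 A : ncover (s1 ++ s2) A = ncover s1 A + ncover s2 A.
Proof. exact: count_cat. Qed.

Lemma ncover_out s A (U : {set T}) :
  all (fun X : {set T} => X \subset U) s -> ~~ (A \subset U) -> ncover s A = 0.
Proof.
move=> sU AU; apply/eqP; rewrite -leqn0 leqNgt -has_count.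
by apply/hasP => -[X /(allP sU) XU AX]; rewrite (subset_trans AX XU) in AU.
Qed.

Lemma invert_seqE s (o : rel T) x y :
  invert_seq s o x y = if odd (ncover s [set x; y]) then o y x else o x y.
Proof.
elim: s o => [|X s IHs] o //=; rewrite IHs /invert /ncover /= subUset !sub1set oddD.
by case: (x \in X); case: (y \in X); case: (odd _).
Qed.

End Inversions.

Section Edges.
Variable T : finType.
Implicit Types (h : rel T) (U A : {set T}).

Lemma set3P (a b c x : T) : reflect [\/ x = a, x = b | x = c] (x \in [set a; b; c]).
Proof.
rewrite !inE; apply: (iffP idP) => [/orP[/orP[]|] /eqP | [] ->]; rewrite ?eqxx ?orbT //;
  by [constructor 1 | constructor 2 | constructor 3].
Qed.

Lemma mem_edges h x y : h x y -> [set x; y] \in edges h.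
Proof.
by move=> hxy; rewrite inE; apply/existsP; exists x; apply/existsP; exists y; rewrite hxy eqxx.
Qed.

Lemma edgesP h A : reflect (exists x y, h x y /\ A = [set x; y]) (A \in edges h).
Proof.
rewrite inE; apply: (iffP existsP) => [[x /existsP[y /andP[hxy /eqP ->]]]|[x [y [hxy ->]]]].
  by exists x, y.
by exists x; apply/existsP; exists y; rewrite hxy eqxx.
Qed.

Lemma card_edge h A : irreflexive h -> A \in edges h -> #|A| = 2.
Proof.
move=> hirr /edgesP[x [y [hxy ->]]]; rewrite cards2.
by case: eqP hxy => [->|//]; rewrite hirr.
Qed.

Definition delete_inside h U : rel T := fun x y => h x y && ~~ ((x \in U) && (y \in U)).

Definition inner_edges h U := [set A in edges h | A \subset U].

Lemma delete_inside_sym h U : symmetric h -> symmetric (delete_inside h U).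
Proof. by move=> hsym x y; rewrite /delete_inside hsym [(y \in U) && _]andbC. Qed.

Lemma delete_inside_irr h U : irreflexive h -> irreflexive (delete_inside h U).
Proof. by move=> hirr x; rewrite /delete_inside hirr. Qed.

Lemma mem_inner_edges h U A : (A \in inner_edges h U) = (A \in edges h) && (A \subset U).
Proof. exact: in_set. Qed.

Lemma edges_delete_inside h U : edges (delete_inside h U) = edges h :\: inner_edges h U.
Proof.
apply/setP => A; apply/edgesP/setDP => [[x [y [/andP[hxy xyU] ->]]]|].
  by rewrite mem_inner_edges mem_edges // subUset !sub1set.
case=> /edgesP[x [y [hxy ->]]]; rewrite mem_inner_edges mem_edges // subUset !sub1set => xyU.
by exists x, y; rewrite /delete_inside hxy xyU.
Qed.

Lemma inner_edges_sub h U : inner_edges h U \subset edges h.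
Proof. by apply/subsetP => A; rewrite mem_inner_edges => /andP[]. Qed.

Lemma card_edges_delete_inside h U :
  #|edges (delete_inside h U)| = #|edges h| - #|inner_edges h U|.
Proof. by rewrite edges_delete_inside cardsD (setIidPr (inner_edges_sub h U)). Qed.

Lemma card_inner_edges h U : irreflexive h -> #|inner_edges h U| <= 'C(#|U|, 2).
Proof.
move=> hirr; rewrite -cards_draws; apply/subset_leq_card/subsetP => A.
by rewrite mem_inner_edges => /andP[Ah AU]; rewrite inE AU (card_edge hirr Ah).
Qed.

Lemma inner_edges_fork h c a b : irreflexive h -> h c a -> h c b -> a != b ->
  2 <= #|inner_edges h [set c; a; b]|.
Proof.
move=> hirr hca hcb ab.
have sub_ab : [set [set c; a]; [set c; b]] \subset inner_edges h [set c; a; b].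
  apply/subsetP => A /set2P[] ->;
    by rewrite mem_inner_edges mem_edges // subUset !sub1set !inE !eqxx ?orbT.
apply: leq_trans (subset_leq_card sub_ab); rewrite cards2 ltnS lt0b.
suff : b \notin [set c; a] by apply: contra => /eqP ->; rewrite !inE eqxx orbT.
by rewrite !inE negb_or [b == a]eq_sym ab andbT; apply: contraL hcb => /eqP ->; rewrite hirr.
Qed.

End Edges.

Section Realization.
Variables (T : finType) (h : rel T) (W : {set T} -> bool).
Hypothesis hirr : irreflexive h.

Definition realizes (s : seq {set T}) (E : {set {set T}}) :=
  {in E, forall A, odd (ncover s A) = W A}.

Lemma realize_inner (U : {set T}) : #|U| <= 3 ->
  exists2 s : seq {set T}, all (fun X : {set T} => X \subset U) s &
    size s <= uphalf #|inner_edges h U| /\ realizes s (inner_edges h U).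
Proof.
move=> U3; set E := inner_edges h U; set F := [set A in E | W A].
have FE : F \subset E by apply/subsetP => A; rewrite inE => /andP[].
have E3 : #|E| <= 3 := leq_trans (card_inner_edges U hirr) (leq_bin2l 2 U3).
have [/andP[/eqP FeqE E0] | not_all] := boolP ((F == E) && (E != set0)).
  exists [:: U]; rewrite /= ?subxx //; split; first by rewrite uphalf_gt0 card_gt0.
  move=> A AE; rewrite /ncover /= addn0.
  have : A \in F by rewrite FeqE.
  rewrite in_set => /andP[_ ->].
  by move: AE; rewrite mem_inner_edges => /andP[_ ->].
exists (enum F).
  by apply/allP => X; rewrite mem_enum => /(subsetP FE); rewrite mem_inner_edges => /andP[].
split.
  suff size_F : #|F| <= uphalf #|E| by rewrite -cardE.
  have [FeqE | FneE] := eqVneq F E.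
    by move: not_all; rewrite FeqE eqxx negbK => /eqP->; rewrite cards0.
  have : #|F| < #|E| by apply: proper_card; rewrite properEneq FneE.
  by rewrite uphalfE; move: E3; lia.
move=> A AE; rewrite /ncover (@eq_in_count _ _ (pred1 A)); last first.
  have card2 B : B \in E -> #|B| = 2 by move/(subsetP (inner_edges_sub h U)); apply: card_edge.
  move=> X; rewrite mem_enum => /(subsetP FE) XE /=.
  by rewrite eq_sym eqEcard (card2 A) ?(card2 X) ?leqnn ?andbT.
by rewrite count_uniq_mem ?enum_uniq // mem_enum in_set AE; case: (W A).
Qed.

Lemma realizes_cat (U : {set T}) s1 s2 :
  realizes s1 (edges (delete_inside h U)) -> all (fun X : {set T} => X \subset U) s2 ->
  {in inner_edges h U, forall A, odd (ncover s2 A) = W A (+) odd (ncover s1 A)} ->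
  realizes (s1 ++ s2) (edges h).
Proof.
move=> ok1 s2U ok2 A Ah; rewrite ncover_cat oddD.
have [AU | AnU] := boolP (A \subset U).
  by rewrite ok2 ?mem_inner_edges ?Ah //; case: (odd _); case: (W A).
rewrite (ncover_out s2U AnU) addbF ok1 // edges_delete_inside.
by apply/setDP; rewrite mem_inner_edges Ah (negbTE AnU).
Qed.

End Realization.

Definition rooted (T : finType) (r : T) (h : rel T) := forall x y, h x y -> connect h r x.

Section Distance.
Variables (T : finType) (h : rel T) (r : T).

Fixpoint ball k : {set T} :=
  if k is k'.+1 then ball k' :|: [set y | [exists x in ball k', h x y]] else [set r].

Lemma ball_connect k x : x \in ball k -> connect h r x.
Proof.
elim: k x => [|k IHk] x /=; first by rewrite inE => /eqP ->.
rewrite !inE => /orP[/IHk // | /existsP[y /andP[yk hyx]]].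
exact: connect_trans (IHk _ yk) (connect1 hyx).
Qed.

Lemma mem_ball_last k x p : x \in ball k -> path h x p -> last x p \in ball (k + size p).
Proof.
elim: p x k => [|y p IHp] x k /=; first by rewrite addn0.
move=> xk /andP[hxy hp]; rewrite addnS -addSn; apply: IHp hp.
by rewrite /= !inE; apply/orP; right; apply/existsP; exists x; rewrite xk hxy.
Qed.

Lemma exists_ball x : exists k, (x \in ball k) || ~~ connect h r x.
Proof.
have [/connectP[p hp ->]|] := boolP (connect h r x); last by exists 0; rewrite orbT.
by exists (0 + size p); rewrite mem_ball_last //= inE.
Qed.

(* Unreachable vertices get distance 0. *)
Definition dist x := ex_minn (exists_ball x).

Lemma mem_ball_dist x : connect h r x -> x \in ball (dist x).
Proof. by rewrite /dist; case: ex_minnP => k /orP[// | /negP nc] _ /nc. Qed.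

Lemma dist_leq_ball k x : x \in ball k -> dist x <= k.
Proof. by move=> xk; rewrite /dist; case: ex_minnP => m _; apply; rewrite xk. Qed.

Lemma dist_root : dist r = 0.
Proof. by apply/eqP; rewrite -leqn0; apply: dist_leq_ball; rewrite /= inE. Qed.

Lemma dist_eq0 x : connect h r x -> dist x = 0 -> x = r.
Proof. by move=> /mem_ball_dist + dx0; rewrite dx0 /= inE => /eqP. Qed.

Lemma dist_edge x y : connect h r x -> h x y -> dist y <= (dist x).+1.
Proof.
move=> cx hxy; apply: dist_leq_ball; rewrite /= !inE.
by apply/orP; right; apply/existsP; exists x; rewrite mem_ball_dist.
Qed.

Lemma dist_parent x : connect h r x -> x != r ->
  exists y, [/\ connect h r y, h y x & (dist y).+1 = dist x].
Proof.
move=> cx xr; have := mem_ball_dist cx.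
case dx: (dist x) => [|k]; first by rewrite (dist_eq0 cx dx) eqxx in xr.
rewrite /= !inE => /orP[xk | /existsP[y /andP[yk hyx]]].
  by have := dist_leq_ball xk; rewrite dx ltnn.
have cy := ball_connect yk; exists y; split=> //.
by have := dist_leq_ball yk; have := dist_edge cy hyx; rewrite dx; lia.
Qed.

Hypotheses (hsym : symmetric h) (hroot : rooted r h).

(* Vertices outside M keep the edge to their BFS parent, and every surviving edge
   at a vertex of M leads out of M. *)
Lemma rooted_delete_inside (U M : {set T}) :
  M \subset U ->
  (forall x y, y \in M -> h x y -> dist y < dist x -> x \in M) ->
  (forall x y, x \in U -> y \in U -> h x y -> dist y < dist x -> x \in M) ->
  rooted r (delete_inside h U).
Proof.
move=> MU up inside; set h' := delete_inside h U.
have reach' x : connect h r x -> x \notin M -> connect h' r x.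
  have [n] := ubnP (dist x); elim: n x => // n IHn x ltxn cx xM.
  have [-> | xr] := eqVneq x r; first exact: connect0.
  have [y [cy hyx dyx]] := dist_parent cx xr.
  have hxy : h x y by rewrite hsym.
  have yM : y \notin M by apply: contra xM => yM; apply: up yM hxy _; rewrite -dyx.
  have h'yx : h' y x.
    rewrite /h' /delete_inside hyx /=; apply: contra xM => /andP[yU xU].
    by apply: inside xU yU hxy _; rewrite -dyx.
  by apply: connect_trans (IHn y _ cy yM) (connect1 h'yx); rewrite -ltnS dyx.
move=> x y h'xy; have [xM | xM] := boolP (x \in M); first last.
  by apply: reach' xM; case/andP: h'xy => /hroot.
have yM : y \notin M.
  apply: contraL h'xy => yM; rewrite /h' /delete_inside.
  by rewrite (subsetP MU _ xM) (subsetP MU _ yM) andbF.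
have h'yx : h' y x by rewrite /h' delete_inside_sym.
apply: connect_trans (reach' y _ yM) (connect1 h'yx).
by apply: hroot (_ : h y x); case/andP: h'yx.
Qed.

End Distance.

Section Farthest.
Variables (T : finType) (h : rel T) (r : T).
Hypotheses (hsym : symmetric h) (hirr : irreflexive h) (hroot : rooted r h).
Local Notation dist := (dist h r).
Variable D : nat.
Hypothesis farthest : forall x, connect h r x -> dist x <= D.

Lemma rooted_delete_top (U : {set T}) :
  {in U, forall z, D <= (dist z).+1} -> rooted r (delete_inside h U).
Proof.
move=> Utop; apply: (rooted_delete_inside hsym hroot (M := [set z in U | dist z == D])).
- by apply/subsetP => z; rewrite inE => /andP[].
- move=> x y; rewrite inE => /andP[_ /eqP ->] hxy; have := farthest (hroot hxy); lia.
- move=> x y xU yU hxy; rewrite inE xU eqn_leq farthest ?(hroot hxy) //=.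
  by have := Utop y yU; lia.
Qed.

Lemma rooted_delete_pendant (v p q : T) :
  dist v = D -> (dist p).+1 = D -> (dist q).+1 = dist p ->
  (forall x, h p x -> dist x = D -> x = v) -> rooted r (delete_inside h [set p; v; q]).
Proof.
move=> dv dp dq only_v.
apply: (rooted_delete_inside hsym hroot (M := [set v; p])).
- by apply/subsetP => z; rewrite !inE => /orP[] ->; rewrite ?orbT.
- move=> x y /set2P[] -> hxy lt; have dx := farthest (hroot hxy).
    by have := leq_trans lt dx; rewrite dv ltnn.
  have -> : x = v by apply: only_v; [rewrite hsym | apply/eqP; rewrite eqn_leq dx -dp].
  by rewrite !inE eqxx.
- by move=> x y /set3P[] -> /set3P[] -> _; rewrite ?inE ?eqxx ?orbT //; lia.
Qed.

Lemma edges_sub_pair (x y : T) :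
  (forall z, connect h r z -> z = x \/ z = y) -> edges h \subset [set [set x; y]].
Proof.
move=> reached; apply/subsetP => A /edgesP[u [w [huw ->]]]; rewrite inE.
have hwu : h w u by rewrite hsym.
have uw : u != w by apply: contraL huw => /eqP ->; rewrite hirr.
move: uw; case: (reached u (hroot huw)) => ->; case: (reached w (hroot hwu)) => ->;
  by rewrite ?eqxx // setUC ?eqxx.
Qed.

End Farthest.

Lemma fork_or_single_edge (T : finType) (h : rel T) (r : T) :
  symmetric h -> irreflexive h -> rooted r h ->
  (exists c a b, [/\ h c a, h c b, a != b & rooted r (delete_inside h [set c; a; b])])
  \/ exists x y, edges h \subset [set [set x; y]].
Proof.
move=> hsym hirr hroot.
have [v cv farthest] :
    exists2 v, connect h r v & forall x, connect h r x -> dist h r x <= dist h r v.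
  by case: (arg_maxnP (dist h r) (connect0 h r)) => v; exists v.
set D := dist h r v in farthest.
have [D0 | Dpos] := posnP D.
  right; exists r, r; apply: (edges_sub_pair hsym hirr hroot) => z cz; left.
  by apply: (dist_eq0 cz); apply/eqP; rewrite -leqn0 -D0; apply: farthest.
have vr : v != r by apply: contraTneq Dpos => vr; rewrite /D vr dist_root.
have [p [cp hpv dp]] := dist_parent cv vr.
have [/existsP[u /and3P[hpu uv /eqP du]] | no_sibling] :=
  boolP [exists u, [&& h p u, u != v & dist h r u == D]].
  left; exists p, v, u; split; rewrite 1?eq_sym //.
  by apply: (rooted_delete_top hsym hroot farthest) => z /set3P[] ->; rewrite ?dp ?du.
have only_v x : h p x -> dist h r x = D -> x = v.
  move=> hpx dx; apply/eqP; apply: contraNT no_sibling => xv.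
  by apply/existsP; exists x; rewrite hpx xv dx eqxx.
have [pr | pnr] := eqVneq p r.
  right; exists r, v; apply: (edges_sub_pair hsym hirr hroot) => z cz.
  have [-> | zr] := eqVneq z r; [by left | right].
  have D1 : D = 1 by rewrite /D -dp pr dist_root.
  have [z' [cz' hz'z dz']] := dist_parent cz zr.
  have z'r : z' = r by apply: (dist_eq0 cz'); have := farthest z cz; lia.
  by apply: only_v; [rewrite pr -z'r | rewrite -dz' z'r dist_root D1].
have [q [cq hqp dq]] := dist_parent cp pnr.
left; exists p, v, q; split=> //; first by rewrite hsym.
  by apply/eqP => vq; move: dq dp; rewrite -vq; lia.
exact: (rooted_delete_pendant hsym hroot farthest _ dp dq only_v).
Qed.

Lemma realize_rooted (T : finType) (r : T) (h : rel T) (W : {set T} -> bool) :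
  symmetric h -> irreflexive h -> rooted r h ->
  exists s : seq {set T}, [/\ size s <= (3 * #|edges h| + 3) %/ 4,
    all (fun X : {set T} => #|X| <= 3) s & realizes W s (edges h)].
Proof.
have [n] := ubnP #|edges h|; elim: n h W => // n IHn h W ltMn hsym hirr hroot.
have small_sub (U : {set T}) s : #|U| <= 3 -> all (fun X : {set T} => X \subset U) s ->
    all (fun X : {set T} => #|X| <= 3) s.
  by move=> U3 /allP sU; apply/allP => X /sU /subset_leq_card /leq_trans; apply.
have inner_le U : #|inner_edges h U| <= #|edges h| by apply/subset_leq_card/inner_edges_sub.
case: (fork_or_single_edge hsym hirr hroot) => [[c [a [b [hca hcb ab hroot']]]] | [x [y single]]].
  set U := [set c; a; b].
  have U3 : #|U| <= 3 by rewrite /U !cardsU !cards1; lia.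
  have m2 : 2 <= #|inner_edges h U| := inner_edges_fork hirr hca hcb ab.
  have m3 : #|inner_edges h U| <= 3 := leq_trans (card_inner_edges U hirr) (leq_bin2l 2 U3).
  have [|s1 [size1 small1 ok1]] := IHn (delete_inside h U) W _ (delete_inside_sym U hsym)
    (delete_inside_irr U hirr) hroot'.
    by rewrite card_edges_delete_inside; have := inner_le U; lia.
  have [s2 sub2 [size2 ok2]] := realize_inner (fun A => W A (+) odd (ncover s1 A)) hirr U3.
  exists (s1 ++ s2); split.
  - by rewrite size_cat; move: size1 size2; rewrite card_edges_delete_inside uphalfE;
      have := inner_le U; lia.
  - by rewrite all_cat small1 (small_sub U).
  - exact: realizes_cat ok1 sub2 ok2.
have U2 : #|[set x; y]| <= 3 by rewrite cards2; case: (_ != _).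
have [s subU [size_s ok]] := realize_inner W hirr U2.
have inner_all : edges h \subset inner_edges h [set x; y].
  apply/subsetP => A A_h; rewrite mem_inner_edges A_h.
  by move/subsetP: single => /(_ A A_h) /set1P ->; rewrite subxx.
exists s; split.
- move: size_s; have := inner_le [set x; y]; have := subset_leq_card single.
  by rewrite cards1 uphalfE; lia.
- exact: small_sub subU.
- by move=> A /(subsetP inner_all); apply: ok.
Qed.

Section Orientations.
Variables (T : finType) (e : rel T).
Implicit Types (o : rel T).

Lemma orientation_off o x y : orientation e o -> ~~ e x y -> o x y = false.
Proof. by move=> or_o; apply: contraNF => /(proj1 (or_o x y)). Qed.

Lemma orientation_rev o x y : orientation e o -> e x y -> o y x = ~~ o x y.
Proof. by move=> or_o /(proj2 (or_o x y)) ->; rewrite negbK. Qed.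

Definition flipped o1 o2 (A : {set T}) :=
  [exists x in A, exists y in A, e x y && (o1 x y != o2 x y)].

Lemma flippedE o1 o2 x y : irreflexive e -> orientation e o1 -> orientation e o2 ->
  e x y -> flipped o1 o2 [set x; y] = (o1 x y != o2 x y).
Proof.
move=> eirr or1 or2 exy; apply/existsP/idP => [[u /andP[/set2P u_xy /existsP[w]]] | flip].
  rewrite andbA => /andP[/andP[/set2P w_xy euw]].
  case: u_xy w_xy euw => -> [] -> //; rewrite ?eirr //.
  by rewrite (orientation_rev or1 exy) (orientation_rev or2 exy); case: (o1 x y); case: (o2 x y).
by exists x; rewrite !inE eqxx /=; apply/existsP; exists y; rewrite !inE eqxx orbT exy.
Qed.

End Orientations.

Theorem mainTheorem4 (T : finType) (e : rel T) :
  simple_graph e -> connected_graph e ->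
  inv_diam_le 3 e ((3 * #|edges e| + 3) %/ 4).
Proof.
move=> [esym eirr] econn o1 o2 or1 or2.
case: (pickP T) => [r _ | T0]; last by exists [::]; split=> //; split=> // x; have := T0 x.
have eroot : rooted r e by move=> x y _; apply: econn.
have [s [size_s small_s ok]] := realize_rooted (flipped e o1 o2) esym eirr eroot.
exists s; split=> //; split=> // x y; rewrite invert_seqE.
have [exy | nexy] := boolP (e x y).
  rewrite ok ?mem_edges // (flippedE eirr or1 or2 exy) (orientation_rev or1 exy).
  by case: (o1 x y); case: (o2 x y).
have neyx : ~~ e y x by rewrite esym.
by rewrite !(orientation_off or1) ?(orientation_off or2) // if_same.
Qed.
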